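(* Let $G$ and $H$ be graphs on the same number $n$ of vertices, and suppose $G$ is regular. If $\lambda(G)\ge\lambda(H)$, then for every integer $s\ge 1$, \[ \lambda(G\vee\overline{K}_s)\ge \lambda(H\vee\overline{K}_s). \]
   Context: $\lambda(\cdot)$ is the spectral radius of the adjacency matrix; $\overline{K}_s$ is the edgeless graph on $s$ vertices; $G\vee H$ denotes the join, obtained from disjoint copies of $G$ and $H$ by adding all edges between them. *)

From HB Require Import structures.
From mathcomp Require Import all_boot all_order all_algebra.
From mathcomp Require Import boolp classical_sets reals.
Set Implicit Arguments. Unset Strict Implicit. Unset Printing Implicit Defensive.
Import Order.TTheory GRing.Theory Num.Theory.
Local Open Scope ring_scope.
Local Open Scope classical_set_scope.

Record graph (n : nat) := Graph {
  gadj :> rel 'I_n;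
  gadj_sym : symmetric gadj;
  gadj_irr : irreflexive gadj }.

Definition regular n (G : graph n) : Prop :=
  exists d : nat, forall v : 'I_n, #|[set w | G v w]| = d.

Definition edgeless (s : nat) : graph s :=
  @Graph s (fun _ _ => false) (fun _ _ => erefl) (fun _ => erefl).

Definition join_rel m k (G : graph m) (H : graph k) : rel 'I_(m + k) :=
  fun x y => match split x, split y with
             | inl a, inl b => G a b
             | inr a, inr b => H a b
             | _, _ => true
             end.

Lemma join_sym m k (G : graph m) (H : graph k) : symmetric (join_rel G H).
Proof.
move=> x y; rewrite /join_rel.
by case: (split x) => a; case: (split y) => b //; apply: gadj_sym.
Qed.

Lemma join_irr m k (G : graph m) (H : graph k) : irreflexive (join_rel G H).
Proof.
move=> x; rewrite /join_rel.
by case: (split x) => a; apply: gadj_irr.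
Qed.

Definition gjoin m k (G : graph m) (H : graph k) : graph (m + k) :=
  @Graph (m + k) (join_rel G H) (@join_sym m k G H) (@join_irr m k G H).

Definition adjmx (R : realType) n (G : graph n) : 'M[R]_n :=
  \matrix_(i, j) (G i j : nat)%:R.

(* For symmetric real
   matrices (such as adjacency matrices) all eigenvalues are real, so it is
   the supremum of |mu| over the real eigenvalues mu. *)
Definition specrad (R : realType) n (A : 'M[R]_n) : R :=
  sup [set `|mu| | mu in [set mu : R | eigenvalue A mu]].

Definition lambda (R : realType) n (G : graph n) : R := specrad (adjmx R G).

From HB Require Import structures.
From mathcomp Require Import all_boot all_order all_algebra.
From mathcomp Require Import boolp classical_sets reals.
From mathcomp Require Import complex.
From mathcomp Require Import ring lra.
Set Implicit Arguments.
Unset Strict Implicit.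
Unset Printing Implicit Defensive.
Import Order.TTheory GRing.Theory Num.Theory.
Local Open Scope ring_scope.

(* Let d be the degree of G and r > 0 the root of r^2 = d r + n s.  The vector
   equal to r on G and to n on the s added vertices is an eigenvector of the
   join G ∨ E_s for r, so λ(G ∨ E_s) >= r.  Conversely λ(H) <= λ(G) <= d, and
   if (x, y) is an eigenvector of H ∨ E_s for μ, its two block equations give
   μ x A_H x^T = μ^2 |x|^2 - s (Σ x)^2.  Bounding |x A_H x^T| <= d |x|^2 by the
   spectral theorem and (Σ x)^2 <= n |x|^2 by Cauchy-Schwarz yields
   |μ|^2 <= d |μ| + n s, that is |μ| <= r. *)

Lemma eigenvalue_le_colsum (R : realFieldType) n (A : 'M[R]_n) (c mu : R) :
  (forall i, \sum_j `|A j i| <= c) -> eigenvalue A mu -> `|mu| <= c.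
Proof.
move=> colA /eigenvalueP [v Av v0].
have [i0 vi0] : exists i0, v 0 i0 != 0.
  apply/existsP; apply: contraR v0 => /existsPn v0.
  by apply/eqP/rowP => j; rewrite mxE; apply/eqP/negPn.
pose i := [arg max_(i > i0) `|v 0 i|]%O.
have vmax j : `|v 0 j| <= `|v 0 i| by rewrite /i; case: arg_maxP => // k _; apply.
have vi_gt0 : 0 < `|v 0 i| by apply: lt_le_trans (vmax i0); rewrite normr_gt0.
rewrite -(ler_pM2r vi_gt0) -normrM.
have -> : mu * v 0 i = \sum_j v 0 j * A j i by have /rowP/(_ i) := Av; rewrite !mxE => <-.
apply: le_trans (ler_norm_sum _ _ _) _.
apply: le_trans (ler_wpM2r (ltW vi_gt0) (colA i)); rewrite mulr_suml.
by apply: ler_sum => j _; rewrite normrM mulrC ler_wpM2l.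
Qed.

Lemma mulmx_const1 (R : pzSemiRingType) m n p (A : 'M[R]_(m, n)) i (j : 'I_p) :
  (A *m const_mx 1) i j = \sum_k A i k.
Proof. by rewrite mxE; apply: eq_bigr => k _; rewrite mxE mulr1. Qed.

Lemma sum_sqr_gt0 (R : realDomainType) n (x : 'rV[R]_n) :
  x != 0 -> 0 < \sum_j x 0 j ^+ 2.
Proof.
move=> x_neq0; rewrite lt0r sumr_ge0 ?andbT => [|j _]; last exact: sqr_ge0.
apply: contra x_neq0; rewrite psumr_eq0 => [/allP x0|j _]; last exact: sqr_ge0.
apply/eqP/rowP => j; rewrite !mxE; apply/eqP; rewrite -sqrf_eq0.
exact: implyP (x0 j (mem_index_enum j)) isT.
Qed.

Section SymmetricQuadform.
Local Open Scope sesquilinear_scope.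

Lemma unitary_diag_quadformE (C : numClosedFieldType) n (P : 'M[C]_n) (E z : 'rV[C]_n) :
  P \is unitarymx ->
  (z *m (P^t* *m diag_mx E *m P) *m z^t*) 0 0 = \sum_j E 0 j * `|(z *m P^t*) 0 j| ^+ 2.
Proof.
move=> PU; set w := z *m P^t*.
have wE : w^t* = P *m z^t* by rewrite trmx_mul map_mxM trmxCK.
rewrite !mulmxA -/w -mulmxA -wE mxE; apply: eq_bigr => j _.
by rewrite mul_mx_diag !mxE normCK mulrCA mulrA.
Qed.

Variable R : rcfType.
Local Notation C := R[i].
Local Notation toC := (real_complex R).

Lemma eigenvalue_map_real_complex n (A : 'M[R]_n) (k : R) :
  eigenvalue (map_mx toC A) (toC k) = eigenvalue A k.
Proof. by rewrite !eigenvalue_root_char -map_char_poly fmorph_root. Qed.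

Lemma trmxC_map_real_complex m n (A : 'M[R]_(m, n)) : (map_mx toC A)^t* = map_mx toC A^T.
Proof.
by apply/matrixP => i j; rewrite !mxE; apply/CrealP/complex_realP; exists (A j i).
Qed.

(* MathComp's spectral theorem is stated over algebraically closed fields,
   hence the detour through R[i]. *)
Lemma real_symmetric_spectral n (A : 'M[R]_n) : A^T = A ->
  exists2 P : 'M[C]_n, P \is unitarymx &
  exists2 D : 'rV[R]_n, map_mx toC A = P^t* *m diag_mx (map_mx toC D) *m P
                      & forall j, eigenvalue A (D 0 j).
Proof.
move=> symA; set Ac := map_mx toC A.
have hermAc : Ac \is hermsymmx.
  apply: realsym_hermsym.
    by apply/is_hermitianmxP; rewrite expr0 scale1r map_mx_id // map_trmx symA.
  by apply/mxOverP => i j; rewrite mxE; apply/complex_realP; exists (A i j).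
have realD := hermitian_spectral_diag_real hermAc.
set P := spectralmx Ac; have PU : P \is unitarymx := spectral_unitarymx Ac.
have AcE : Ac = P^t* *m diag_mx (spectral_diag Ac) *m P.
  by rewrite -invmx_unitary //; apply/orthomx_spectralP/hermitian_normalmx.
exists P => //; exists (map_mx (@complex.Re R) (spectral_diag Ac)).
  rewrite [LHS]AcE; congr (_ *m diag_mx _ *m _).
  by apply/matrixP => i j; rewrite !mxE RRe_real // (mxOverP realD).
move=> j; rewrite -eigenvalue_map_real_complex mxE RRe_real ?(mxOverP realD) //.
apply/eigenvalueP; exists (row j P).
  rewrite -row_mul -/Ac [X in P *m X]AcE !mulmxA (unitarymxP PU) mul1mx mul_diag_mx.
  by apply/rowP => k; rewrite !mxE.
apply/eqP => /(congr1 (fun v => (v *m P^t*) 0 j)).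
by rewrite -row_mul (unitarymxP PU) mul0mx !mxE eqxx => /eqP; rewrite oner_eq0.
Qed.

Lemma symmetric_quadform_le n (A : 'M[R]_n) (d : R) : A^T = A ->
  (forall mu, eigenvalue A mu -> `|mu| <= d) ->
  forall x : 'rV_n, `|(x *m A *m x^T) 0 0| <= d * \sum_j x 0 j ^+ 2.
Proof.
move=> symA eigA x; have [P PU [D AE eigD]] := real_symmetric_spectral symA.
set w := map_mx toC x *m P^t*.
pose c j := complex.Re (w 0 j) ^+ 2 + complex.Im (w 0 j) ^+ 2.
have c_ge0 j : 0 <= c j by rewrite addr_ge0 ?sqr_ge0.
have toC_quadform (B : 'M[R]_n) :
  toC ((x *m B *m x^T) 0 0) = (map_mx toC x *m map_mx toC B *m (map_mx toC x)^t*) 0 0.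
  by rewrite trmxC_map_real_complex -!map_mxM [RHS]mxE.
have xAx : (x *m A *m x^T) 0 0 = \sum_j D 0 j * c j.
  apply: complexI; rewrite toC_quadform AE unitary_diag_quadformE // rmorph_sum.
  by apply: eq_bigr => j _; rewrite rmorphM -add_Re2_Im2 mxE.
have PtP : P^t* *m diag_mx (const_mx 1) *m P = 1%:M.
  by rewrite diag_const_mx mulmx1 -invmx_unitary // mulVmx // unitarymx_unit.
have xx : \sum_j x 0 j ^+ 2 = \sum_j c j.
  have := unitary_diag_quadformE (const_mx 1) (map_mx toC x) PU.
  rewrite PtP -(map_mx1 toC) -toC_quadform mulmx1 mxE => xxE.
  apply: complexI; rewrite (eq_bigr (fun j => x 0 j * x^T j 0)) ?xxE; last first.
    by move=> j _; rewrite mxE expr2.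
  by rewrite rmorph_sum; apply: eq_bigr => j _; rewrite mxE mul1r -add_Re2_Im2.
rewrite xAx xx mulr_sumr; apply: le_trans (ler_norm_sum _ _ _) _.
by apply: ler_sum => j _; rewrite normrM (ger0_norm (c_ge0 j)) ler_wpM2r ?eigA ?eigD.
Qed.

Lemma sqr_sum_le n (x : 'rV[R]_n) : (\sum_j x 0 j) ^+ 2 <= n%:R * \sum_j x 0 j ^+ 2.
Proof.
have J_sym : (const_mx 1 : 'M[R]_n)^T = const_mx 1 by apply/matrixP => i j; rewrite !mxE.
have J_eig mu : eigenvalue (const_mx 1 : 'M[R]_n) mu -> `|mu| <= n%:R.
  apply: eigenvalue_le_colsum => i.
  by under eq_bigr do rewrite mxE normr1; rewrite sumr_const card_ord.
have xJx : (x *m const_mx 1 *m x^T) 0 0 = (\sum_j x 0 j) ^+ 2.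
  by rewrite mxE expr2 mulr_sumr; apply: eq_bigr => j _; rewrite mulmx_const1 mxE mulrC.
by rewrite -xJx (le_trans (ler_norm _)) ?symmetric_quadform_le.
Qed.

End SymmetricQuadform.

Lemma le_quadratic_root (R : realDomainType) (b c r t : R) :
  0 <= c -> 0 < r -> r ^+ 2 = b * r + c -> t ^+ 2 <= b * t + c -> t <= r.
Proof.
move=> c_ge0 r_gt0 rE tE; rewrite leNgt; apply/negP => rt.
have b_le_r : b <= r by nra.
have : 0 < (t - r) * (t + r - b) by apply: mulr_gt0; lra.
nra.
Qed.

Lemma exists_quadratic_root (R : rcfType) (b c : R) :
  0 < c -> exists2 r : R, 0 < r & r ^+ 2 = b * r + c.
Proof.
move=> c_gt0; pose q := Num.sqrt (b ^+ 2 + 4 * c).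
have qE : q ^+ 2 = b ^+ 2 + 4 * c by rewrite sqr_sqrtr // addr_ge0 ?sqr_ge0 //; lra.
have q_ge0 : 0 <= q := sqrtr_ge0 _.
exists ((b + q) / 2); nra.
Qed.

Section SpectralRadius.
Variable R : realType.

Lemma eigenvalue_le_specrad n (A : 'M[R]_n) mu : eigenvalue A mu -> `|mu| <= specrad A.
Proof.
move=> Amu; apply: sup_upper_bound; last by exists mu.
split; first by exists `|mu|, mu.
exists (\sum_i \sum_j `|A j i|) => _ [nu Anu <-]; apply: eigenvalue_le_colsum Anu => i.
by rewrite [leRHS](bigD1 i) //= lerDl sumr_ge0 // => k _; apply: sumr_ge0.
Qed.

Lemma specrad_le n (A : 'M[R]_n) r : 0 <= r ->
  (forall mu, eigenvalue A mu -> `|mu| <= r) -> specrad A <= r.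
Proof.
move=> r_ge0 eigA; rewrite /specrad.
set E := [set `|mu| | mu in _]%classic; have [->|/set0P E0] := eqVneq E set0.
  by rewrite sup0.
by apply: ge_sup => // _ [mu Amu <-]; apply: eigA.
Qed.

End SpectralRadius.

Section Graphs.
Variable R : realType.

Lemma adjmx_sym n (G : graph n) : (adjmx R G)^T = adjmx R G.
Proof. by apply/matrixP => i j; rewrite !mxE gadj_sym. Qed.

Lemma adjmx_edgeless s : adjmx R (edgeless s) = 0.
Proof. by apply/matrixP => i j; rewrite !mxE. Qed.

Lemma adjmx_join m k (G : graph m) (H : graph k) :
  adjmx R (gjoin G H) = block_mx (adjmx R G) (const_mx 1) (const_mx 1) (adjmx R H).
Proof.
apply/matrixP => i j; rewrite !mxE /= /join_rel.
by case: (split i) => a; rewrite !mxE; case: (split j) => b; rewrite ?mxE.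
Qed.

Lemma regular_sum_adj n (G : graph n) d :
  (forall v, #|[set w | G v w]%classic| = d) -> forall i, \sum_j (G j i : nat)%:R = d%:R :> R.
Proof.
move=> degG i; rewrite -natr_sum -(degG i) -sum1_card; congr _%:R.
rewrite [RHS]big_mkcond; apply: eq_bigr => j _; rewrite gadj_sym.
have -> : (j \in [set w | G i w]%classic) = G i j by apply/idP/idP => [/set_mem|/mem_set].
by case: (G i j).
Qed.

Lemma regular_eigenvalue_le n (G : graph n) d mu :
  (forall i, \sum_j (G j i : nat)%:R = d%:R :> R) ->
  eigenvalue (adjmx R G) mu -> `|mu| <= d%:R.
Proof.
move=> sumG; apply: eigenvalue_le_colsum => i.
by under eq_bigr do rewrite mxE normr_nat; rewrite sumG.
Qed.

Lemma join_edgeless_eigenvalue_le n s (H : graph n) (d r : R) :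
  (forall mu, eigenvalue (adjmx R H) mu -> `|mu| <= d) ->
  0 < r -> r ^+ 2 = d * r + (n * s)%:R ->
  forall mu, eigenvalue (adjmx R (gjoin H (edgeless s))) mu -> `|mu| <= r.
Proof.
move=> eigH r_gt0 rE mu /eigenvalueP [v Hv v_neq0].
rewrite adjmx_join adjmx_edgeless -[v]hsubmxK mul_row_block scale_row_mx in Hv.
case/eq_row_mx: Hv; rewrite mulmx0 addr0 => EH EK.
set x := lsubmx v; set y := rsubmx v.
pose S := \sum_a x 0 a; pose T := \sum_j y 0 j; pose N := \sum_a x 0 a ^+ 2.
have S_eq j : S = mu * y 0 j by have /rowP/(_ j) := EK; rewrite mulmx_const1 mxE.
have muT : mu * T = s%:R * S.
  rewrite mulr_sumr (eq_bigr (fun=> S)) => [|j _]; last by rewrite (S_eq j).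
  by rewrite sumr_const card_ord mulr_natl.
have xA_eq b : (x *m adjmx R H) 0 b = mu * x 0 b - T.
  have /rowP/(_ b) := EH; rewrite [(_ + _ : 'rV_n) _ _]mxE [(_ *: _ : 'rV_n) _ _]mxE.
  by rewrite mulmx_const1 => <-; rewrite addrK.
have xAx : (x *m adjmx R H *m x^T) 0 0 = mu * N - T * S.
  rewrite mxE /N /S !mulr_sumr -sumrB; apply: eq_bigr => b _.
  by rewrite xA_eq [x^T _ _]mxE; ring.
have [-> | mu_neq0] := eqVneq mu 0; first by rewrite normr0 ltW.
have N_gt0 : 0 < N.
  apply: sum_sqr_gt0; apply: contra v_neq0 => /eqP x0.
  have y0 : y = 0.
    apply/rowP => j; apply: (mulfI mu_neq0).
    by rewrite -S_eq /S x0 mxE mulr0 big1 // => a _; rewrite mxE.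
  by rewrite -[v]hsubmxK -/x -/y x0 y0 row_mx0.
have quadH := symmetric_quadform_le (adjmx_sym H) eigH x; rewrite xAx -/N in quadH.
have sumx := sqr_sum_le x; rewrite -/S -/N in sumx.
apply: (le_quadratic_root _ r_gt0 rE); first exact: ler0n.
rewrite -(ler_pM2r N_gt0) real_normK ?num_real // natrM.
have : mu * (mu * N - T * S) <= `|mu| * (d * N).
  by apply: le_trans (ler_norm _) _; rewrite normrM ler_wpM2l.
have -> : mu * (mu * N - T * S) = mu ^+ 2 * N - s%:R * S ^+ 2.
  by rewrite [S ^+ 2]expr2 mulrA -muT; ring.
have : s%:R * S ^+ 2 <= s%:R * (n%:R * N) :> R by rewrite ler_wpM2l ?ler0n.
nra.
Qed.

Lemma regular_join_edgeless_eigenvalue n s (G : graph n) d (r : R) :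
  (0 < n)%N -> r != 0 -> (forall i, \sum_j (G j i : nat)%:R = d%:R :> R) ->
  r ^+ 2 = d%:R * r + (n * s)%:R ->
  eigenvalue (adjmx R (gjoin G (edgeless s))) r.
Proof.
move=> n_gt0 r_neq0 sumG rE; apply/eigenvalueP.
exists (row_mx (const_mx r) (const_mx n%:R)).
  rewrite adjmx_join adjmx_edgeless mul_row_block scale_row_mx mulmx0 addr0.
  congr row_mx; apply/rowP => j; rewrite !mxE.
    under eq_bigr do rewrite !mxE; under [X in _ + X]eq_bigr do rewrite !mxE mulr1.
    by rewrite -mulr_sumr sumG sumr_const card_ord -expr2 rE natrM; ring.
  under eq_bigr do rewrite !mxE mulr1.
  by rewrite sumr_const card_ord mulr_natr.
apply/eqP => /rowP/(_ (lshift s (Ordinal n_gt0))).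
by rewrite row_mxEl !mxE; apply/eqP.
Qed.

End Graphs.

Theorem theorem5p2 (R : realType) (n : nat) (G H : graph n) :
  regular G -> lambda R H <= lambda R G ->
  forall s : nat, (1 <= s)%N ->
    lambda R (gjoin H (edgeless s)) <= lambda R (gjoin G (edgeless s)).
Proof.
move=> [d /(regular_sum_adj R) sumG] leHG s s_gt0.
case: n => [|n] in G H sumG leHG *.
  by rewrite /lambda !adjmx_join [adjmx R G]flatmx0 [adjmx R H]flatmx0.
have eigG mu : eigenvalue (adjmx R G) mu -> `|mu| <= d%:R := regular_eigenvalue_le sumG.
have eigH mu : eigenvalue (adjmx R H) mu -> `|mu| <= d%:R.
  move/eigenvalue_le_specrad/le_trans; apply; apply: le_trans leHG _.
  exact: specrad_le (ler0n _ _) eigG.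
have [r r_gt0 rE] : exists2 r : R, 0 < r & r ^+ 2 = d%:R * r + (n.+1 * s)%:R.
  by apply: exists_quadratic_root; rewrite ltr0n muln_gt0.
apply: le_trans (specrad_le (ltW r_gt0) (join_edgeless_eigenvalue_le eigH r_gt0 rE)) _.
have Gr := regular_join_edgeless_eigenvalue (ltn0Sn n) (lt0r_neq0 r_gt0) sumG rE.
by have := eigenvalue_le_specrad Gr; rewrite gtr0_norm.
Qed.
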